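(* Let $n\ge 1$ and let $\mathbf{P}_A,\mathbf{P}_B,\mathbf{Q}_A,\mathbf{Q}_B\in\mathbb{R}^{n\times n}$ be symmetric positive definite; put $\mathbf{C}_A=\mathbf{P}_A+\mathbf{Q}_A$, $\mathbf{C}_B=\mathbf{P}_B+\mathbf{Q}_B$. Let $J$ be an increasing cost function and let $\omega^*\in\arg\min_{\omega\in[0,1]}J(\mathbf{B}_{\mathrm{SCI}}(\omega))$, $\bar\omega^*=1-\omega^*$. Then the triple $\mathbf{K}_A^*=\omega^*\mathbf{B}_{\mathrm{SCI}}(\omega^* )(\mathbf{P}_A+\omega^*\mathbf{Q}_A)^{-1}$, $\mathbf{K}_B^*=\bar\omega^*\mathbf{B}_{\mathrm{SCI}}(\omega^* )(\mathbf{P}_B+\bar\omega^*\mathbf{Q}_B)^{-1}$, $\mathbf{B}_F^*=\mathbf{B}_{\mathrm{SCI}}(\omega^* )$ is a solution of the problem: minimize $J(\mathbf{B}_F)$ over all pairs $(\mathbf{K},\mathbf{B}_F)$ defining a conservative fusion.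
   Context: $\mathcal{A}_{\mathrm{Split}}=\{\mathbf{M}\in\mathbb{R}^{n\times n} : \begin{bmatrix}\mathbf{P}_A & \mathbf{M}\\ \mathbf{M}^\intercal & \mathbf{P}_B\end{bmatrix}\succeq 0\}$. For $\mathbf{K}=(\mathbf{K}_A,\mathbf{K}_B)$ and $\mathbf{P}_{AB}\in\mathcal{A}_{\mathrm{Split}}$, $\mathbf{C}_F(\mathbf{K},\mathbf{P}_{AB})=\mathbf{K}_A\mathbf{C}_A\mathbf{K}_A^\intercal+\mathbf{K}_A\mathbf{P}_{AB}\mathbf{K}_B^\intercal+\mathbf{K}_B\mathbf{P}_{AB}^\intercal\mathbf{K}_A^\intercal+\mathbf{K}_B\mathbf{C}_B\mathbf{K}_B^\intercal$. A pair $(\mathbf{K},\mathbf{B}_F)$ ($\mathbf{B}_F$ symmetric) defines a conservative fusion if $\mathbf{K}_A+\mathbf{K}_B=\mathbf{I}$ and $\mathbf{B}_F\succeq\mathbf{C}_F(\mathbf{K},\mathbf{P}_{AB})$ for all $\mathbf{P}_{AB}\in\mathcal{A}_{\mathrm{Split}}$. For $\omega\in[0,1]$, $\bar\omega=1-\omega$: $\mathbf{B}_{\mathrm{SCI}}(\omega)^{-1}=\omega(\mathbf{P}_A+\omega\mathbf{Q}_A)^{-1}+\bar\omega(\mathbf{P}_B+\bar\omega\mathbf{Q}_B)^{-1}$. $J$ increasing means: $\mathbf{P}\preceq\mathbf{Q}\Rightarrow J(\mathbf{P})\le J(\mathbf{Q})$, and $\mathbf{P}\preceq\mathbf{Q}$,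 $\mathbf{P}\ne\mathbf{Q}\Rightarrow J(\mathbf{P})<J(\mathbf{Q})$ (Loewner order). *)

From HB Require Import structures.
From mathcomp Require Import all_boot all_order all_algebra.
From mathcomp Require Import reals.
Set Implicit Arguments. Unset Strict Implicit. Unset Printing Implicit Defensive.
Import Order.TTheory GRing.Theory Num.Theory.
Local Open Scope ring_scope.

Section Defs.
Variable R : realType.

Definition symmx m (A : 'M[R]_m) : Prop := A^T = A.

Definition psdmx m (A : 'M[R]_m) : Prop :=
  symmx A /\ forall x : 'cV[R]_m, 0 <= (x^T *m A *m x) 0 0.

Definition pdmx m (A : 'M[R]_m) : Prop :=
  symmx A /\ forall x : 'cV[R]_m, x != 0 -> 0 < (x^T *m A *m x) 0 0.

Definition loewner_le m (P Q : 'M[R]_m) : Prop := psdmx (Q - P).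

Definition increasing_cost m (J : 'M[R]_m -> R) : Prop :=
  (forall P Q, symmx P -> symmx Q -> loewner_le P Q -> J P <= J Q) /\
  (forall P Q, symmx P -> symmx Q -> loewner_le P Q -> P <> Q -> J P < J Q).

(* A_Split: admissible cross-covariances *)
Definition A_Split m (PA PB M : 'M[R]_m) : Prop :=
  psdmx (block_mx PA M M^T PB).

Definition C_F m (CA CB KA KB PAB : 'M[R]_m) : 'M[R]_m :=
  KA *m CA *m KA^T + KA *m PAB *m KB^T + KB *m PAB^T *m KA^T + KB *m CB *m KB^T.

Definition conservative_fusion m (PA PB QA QB KA KB BF : 'M[R]_m) : Prop :=
  symmx BF /\ KA + KB = 1%:M /\
  forall PAB, A_Split PA PB PAB ->
    loewner_le (C_F (PA + QA) (PB + QB) KA KB PAB) BF.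

Definition B_SCI m (PA PB QA QB : 'M[R]_m) (w : R) : 'M[R]_m :=
  invmx (w *: invmx (PA + w *: QA) + (1 - w) *: invmx (PB + (1 - w) *: QB)).

End Defs.

From HB Require Import structures.
From mathcomp Require Import all_boot all_order all_algebra.
From mathcomp Require Import classical_sets reals.
From mathcomp Require Import ring lra.
Import Order.TTheory GRing.Theory Num.Theory.
Local Open Scope ring_scope.
Set Implicit Arguments. Unset Strict Implicit. Unset Printing Implicit Defensive.

(* The SCI gains are conservative because, with p = (P_A + w Q_A)^-1 B_SCI(w) x
   and q = (P_B + (1-w) Q_B)^-1 B_SCI(w) x, the form x^T (B_SCI(w) - C_F) x equals
   w (1-w) times the joint covariance [[P_A, P_AB], [P_AB^T, P_B]] evaluated at
   (p, -q).
   Conversely, let (K, B_F) be conservative and put A = K_A P_A K_A^T,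
   B = K_B P_B K_B^T and D = B_F - K_A C_A K_A^T - K_B C_B K_B^T. Testing B_F
   against the rank-one cross-covariances c P_A u v^T P_B gives
   x^T D x >= 2 sqrt((x^T A x) (x^T B x)) for all x, so each quadratic
   s |-> s^2 x^T A x - s x^T D x + x^T B x has real roots. Their root intervals
   pairwise intersect, and a supremum argument produces one s > 0 lying in all of
   them, i.e. s A + B / s <= D. For w = 1 / (1 + s) the variational bound on the
   parallel sum (w X^-1 + (1-w) Y^-1)^-1 then gives B_SCI(w) <= B_F, so
   J (B_SCI wstar) <= J (B_SCI w) <= J B_F. *)

Section Forms.
Variables (R : comPzRingType) (m : nat).
Implicit Types (M N : 'M[R]_m) (x y u : 'cV[R]_m).

Definition bform M x y : R := (x^T *m M *m y) 0 0.
Definition qform M x : R := bform M x x.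

Lemma bformDm M N x y : bform (M + N) x y = bform M x y + bform N x y.
Proof. by rewrite /bform mulmxDr mulmxDl mxE. Qed.

Lemma bformBm M N x y : bform (M - N) x y = bform M x y - bform N x y.
Proof. by rewrite /bform mulmxBr mulmxBl !mxE. Qed.

Lemma bformZm a M x y : bform (a *: M) x y = a * bform M x y.
Proof. by rewrite /bform -scalemxAr -scalemxAl mxE. Qed.

Lemma bform0m x y : bform 0 x y = 0.
Proof. by rewrite /bform mulmx0 mul0mx mxE. Qed.

Lemma bformDl M x y u : bform M (x + y) u = bform M x u + bform M y u.
Proof. by rewrite /bform linearD /= !mulmxDl mxE. Qed.

Lemma bformDr M x y u : bform M u (x + y) = bform M u x + bform M u y.
Proof. by rewrite /bform !mulmxDr mxE. Qed.

Lemma bformZl a M x y : bform M (a *: x) y = a * bform M x y.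
Proof. by rewrite /bform linearZ /= -!scalemxAl mxE. Qed.

Lemma bformZr a M x y : bform M x (a *: y) = a * bform M x y.
Proof. by rewrite /bform -!scalemxAr mxE. Qed.

Lemma bformNl M x y : bform M (- x) y = - bform M x y.
Proof. by rewrite -scaleN1r bformZl mulN1r. Qed.

Lemma bformNr M x y : bform M x (- y) = - bform M x y.
Proof. by rewrite -scaleN1r bformZr mulN1r. Qed.

Lemma bform_tr M x y : bform M^T x y = bform M y x.
Proof.
by rewrite /bform -!trace_mx11 -mxtrace_tr !trmx_mul !trmxK mulmxA.
Qed.

Lemma bformC M x y : M^T = M -> bform M x y = bform M y x.
Proof. by move=> sM; rewrite -{1}sM bform_tr. Qed.

Lemma qform_expand M x y a :
  qform M (x + a *: y) = qform M x + a * (bform M x y + bform M y x) + a ^+ 2 * qform M y.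
Proof. rewrite /qform !(bformDl, bformDr, bformZl, bformZr); ring. Qed.

Lemma qformN M x : qform M (- x) = qform M x.
Proof. by rewrite /qform bformNl bformNr opprK. Qed.

Lemma bform_rank1 M N u y x z c :
  bform (c *: ((M *m u) *m (N *m y)^T)) x z = c * (bform M^T u x * bform N^T y z).
Proof.
rewrite bformZm; congr (_ * _).
rewrite /bform (mulmxA x^T) -(mulmxA (x^T *m (M *m u))) [LHS]mxE big_ord1.
by rewrite -[(x^T *m _) 0 0]trace_mx11 -mxtrace_tr trace_mx11 !trmx_mul !trmxK.
Qed.

End Forms.

Lemma bform_mul (R : comPzRingType) m p (K L : 'M[R]_(m, p)) (M : 'M[R]_p)
    (x y : 'cV[R]_m) :
  bform (K *m M *m L^T) x y = bform M (K^T *m x) (L^T *m y).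
Proof. by rewrite /bform trmx_mul trmxK !mulmxA. Qed.

Lemma bform_block (R : comPzRingType) m (A1 A2 A3 A4 : 'M[R]_m)
    (x1 x2 y1 y2 : 'cV[R]_m) :
  bform (block_mx A1 A2 A3 A4) (col_mx x1 x2) (col_mx y1 y2) =
  bform A1 x1 y1 + bform A2 x1 y2 + bform A3 x2 y1 + bform A4 x2 y2.
Proof. rewrite /bform tr_col_mx mul_row_block mul_row_col !mulmxDl !mxE; ring. Qed.

Section SemidefiniteForms.
Variables (R : realFieldType) (m : nat) (M : 'M[R]_m).
Hypothesis M_ge0 : forall x, 0 <= qform M x.

Lemma qform_eq0_polar x : qform M x = 0 -> forall y, bform M x y + bform M y x = 0.
Proof.
move=> qx y; set c := bform M x y + bform M y x.
have qy := M_ge0 y; set l := - c / (qform M y + 1).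
have el : l * (qform M y + 1) = - c by rewrite /l divfK // gt_eqF //; lra.
have := M_ge0 (x + l *: y); rewrite qform_expand qx -/c add0r => h.
have : 0 <= (qform M y + 1) ^+ 2 * (l * c + l ^+ 2 * qform M y).
  by apply: mulr_ge0; [exact: sqr_ge0 | lra].
have -> : (qform M y + 1) ^+ 2 * (l * c + l ^+ 2 * qform M y) =
  (l * (qform M y + 1)) * c * (qform M y + 1) + (l * (qform M y + 1)) ^+ 2 * qform M y
  by ring.
rewrite el; have := sqr_ge0 c => c2 h2.
by apply/eqP; rewrite -sqrf_eq0; apply/eqP; nra.
Qed.

Lemma bform_sqr_le u a : M^T = M -> bform M u a ^+ 2 <= qform M u * qform M a.
Proof.
move=> sM; have [qa0|qa_neq0] := eqVneq (qform M a) 0.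
  have := qform_eq0_polar qa0 u; rewrite (bformC _ _ sM) qa0 mulr0 => h.
  by nra.
have qa_gt0 : 0 < qform M a by rewrite lt_def qa_neq0 M_ge0.
have := M_ge0 (u + (- bform M u a / qform M a) *: a).
rewrite qform_expand (bformC a u sM).
have -> : qform M u + (- bform M u a / qform M a) * (bform M u a + bform M u a)
    + (- bform M u a / qform M a) ^+ 2 * qform M a
    = qform M u - bform M u a ^+ 2 / qform M a.
  by field; rewrite gt_eqF.
by rewrite subr_ge0 ler_pdivrMr.
Qed.

End SemidefiniteForms.

Section RealInequalities.
Variable R : realFieldType.
Implicit Types a c k q s U V al be : R.

Lemma exists_small_pos q k c s : 0 < q -> 0 < k -> 0 <= c -> 0 < s ->
  exists d, [/\ 0 < d, d * k < q, c * d < k & d < s].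
Proof.
move=> q0 k0 c0 s0.
set d1 := q / (2 * k); set d2 := k / (2 * (c + 1)).
have d1_gt0 : 0 < d1 by apply: divr_gt0 => //; lra.
have d2_gt0 : 0 < d2 by apply: divr_gt0 => //; lra.
have e1 : d1 * (2 * k) = q by rewrite /d1 divfK // gt_eqF //; lra.
have e2 : d2 * (2 * (c + 1)) = k by rewrite /d2 divfK // gt_eqF //; lra.
set d := Num.min (Num.min d1 d2) (s / 2).
have d_gt0 : 0 < d by rewrite !lt_min d1_gt0 d2_gt0; lra.
have [[dd1 dd2] dd3] : (d <= d1 /\ d <= d2) /\ d <= s / 2.
  by rewrite !ge_min !lexx !orbT.
exists d; split => //; [nra | nra | lra].
Qed.

Lemma small_sqr_lt a c : 0 < a -> 0 <= c -> exists2 e, 0 < e & e ^+ 2 * c < a.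
Proof.
move=> a0 c0; exists (a / (a + c + 1)); first by apply: divr_gt0; lra.
set e := a / (a + c + 1).
have ee : e * (a + c + 1) = a by rewrite /e divfK // gt_eqF //; lra.
have e0 : 0 < e by apply: divr_gt0; lra.
have e1 : e < 1 by nra.
nra.
Qed.

Lemma rank1_block_ge0 U V al be m1 m2 c :
  0 <= U -> 0 <= V -> 0 <= al -> 0 <= be -> m1 ^+ 2 <= U * al -> m2 ^+ 2 <= be * V ->
  c ^+ 2 * al * be <= 1 -> 0 <= U + 2 * c * (m1 * m2) + V.
Proof.
move=> U0 V0 al0 be0 h1 h2 hc.
have t2 : (c * (m1 * m2)) ^+ 2 <= U * V.
  have h12 : m1 ^+ 2 * m2 ^+ 2 <= (U * al) * (be * V) by apply: ler_pM; rewrite ?sqr_ge0.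
  rewrite !exprMn; apply: (le_trans (ler_wpM2l (sqr_ge0 c) h12)).
  have -> : c ^+ 2 * (U * al * (be * V)) = (c ^+ 2 * al * be) * (U * V) by ring.
  by rewrite ler_piMl // mulr_ge0.
rewrite -mulrA; move: t2; set t := c * (m1 * m2) => t2.
have : 0 <= (U - V) ^+ 2 := sqr_ge0 _.
nra.
Qed.

End RealInequalities.

Lemma exists_pos_root_quadratic (R : rcfType) (a b c : R) : a < 0 -> 0 < c ->
  exists2 l, 0 < l & a + l * b + l ^+ 2 * c = 0.
Proof.
move=> a0 c0; have disc_ge0 : 0 <= b ^+ 2 - 4 * a * c by nra.
set d := Num.sqrt (b ^+ 2 - 4 * a * c).
have dd : d ^+ 2 = b ^+ 2 - 4 * a * c by rewrite sqr_sqrtr.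
have d0 : 0 <= d := sqrtr_ge0 _.
have c2 : 2 * c != 0 by rewrite gt_eqF //; lra.
exists ((d - b) / (2 * c)); first by apply: divr_gt0; nra.
set l := (d - b) / (2 * c); have hl : 2 * c * l = d - b by rewrite mulrC divfK.
apply: (mulfI (_ : 4 * c != 0)); first by rewrite gt_eqF //; lra.
have -> : 4 * c * (a + l * b + l ^+ 2 * c)
    = 4 * a * c + 2 * b * (2 * c * l) + (2 * c * l) ^+ 2 by ring.
rewrite hl mulr0; lra.
Qed.

Lemma sqr_le_of_linear_bound (R : rcfType) (p d : R) : 0 <= p ->
  (forall c, c ^+ 2 * p <= 1 -> 2 * c * p <= d) -> 4 * p <= d ^+ 2.
Proof.
move=> p0 hd; have [->|p_neq0] := eqVneq p 0; first by rewrite mulr0 sqr_ge0.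
have r0 : 0 < Num.sqrt p by rewrite sqrtr_gt0 lt_def p_neq0.
set r := Num.sqrt p in r0; have rr : r ^+ 2 = p by rewrite sqr_sqrtr.
have := hd r^-1; rewrite -rr exprVn mulVf ?lexx ?expf_neq0 ?gt_eqF //.
have -> : 2 * r^-1 * r ^+ 2 = 2 * r by field; rewrite gt_eqF.
by move=> /(_ isT); nra.
Qed.

Section DefiniteMatrices.
Variables (R : realType) (m : nat).
Implicit Types (M N : 'M[R]_m) (x y u : 'cV[R]_m).

Lemma pdmx_qform_ge0 M : pdmx M -> forall x, 0 <= qform M x.
Proof.
move=> [_ M_gt0] x; have [->|x0] := eqVneq x 0; last exact/ltW/M_gt0.
by rewrite /qform /bform mulmx0 mxE.
Qed.

Lemma pdmx_unit M : pdmx M -> M \in unitmx.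
Proof.
move=> [_ M_gt0]; rewrite unitmxE unitfE; apply/negP => /det0P [v v0 vM].
by have := M_gt0 v^T; rewrite trmx_eq0 trmxK vM mul0mx mxE ltxx => /(_ v0).
Qed.

Lemma symmx_inv M : symmx M -> symmx (invmx M).
Proof. by rewrite /symmx trmx_inv => ->. Qed.

Lemma symmx_add M N : symmx M -> symmx N -> symmx (M + N).
Proof. by rewrite /symmx linearD /= => -> ->. Qed.

Lemma symmx_scale a M : symmx M -> symmx (a *: M).
Proof. by rewrite /symmx linearZ /= => ->. Qed.

Lemma qform_inv M y : M \in unitmx -> symmx M ->
  qform (invmx M) y = qform M (invmx M *m y).
Proof.
move=> uM sM; rewrite /qform /bform trmx_mul (symmx_inv sM) !mulmxA.
by rewrite mulmxKV.
Qed.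

Lemma bform_invr M u y : M \in unitmx -> bform M u (invmx M *m y) = (u^T *m y) 0 0.
Proof. by move=> uM; rewrite /bform mulmxA mulmxK. Qed.

Lemma pdmx_inv M : pdmx M -> pdmx (invmx M).
Proof.
move=> pM; have uM := pdmx_unit pM; have [sM M_gt0] := pM.
split=> [|x x0]; first exact: symmx_inv.
rewrite -/(bform _ x x) -/(qform _ x) qform_inv //; apply: M_gt0.
by apply: contra x0 => /eqP h; rewrite -(mulKVmx uM x) h mulmx0.
Qed.

Lemma pdmx_addZ M N c : pdmx M -> pdmx N -> 0 <= c -> pdmx (M + c *: N).
Proof.
move=> [sM M_gt0] pN c0.
split; first by apply: symmx_add => //; apply/symmx_scale; case: pN.
move=> x x0; rewrite -/(bform _ x x) bformDm bformZm.
have : 0 < qform M x := M_gt0 x x0; have := pdmx_qform_ge0 pN x; rewrite /qform; nra.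
Qed.

Lemma pdmx_comb M N w : pdmx M -> pdmx N -> 0 <= w <= 1 ->
  pdmx (w *: M + (1 - w) *: N).
Proof.
move=> [sM M_gt0] [sN N_gt0] /andP[w0 w1].
split; first by apply: symmx_add; apply: symmx_scale.
move=> x x0; rewrite -/(bform _ x x) bformDm !bformZm.
have : 0 < bform M x x := M_gt0 x x0; have : 0 < bform N x x := N_gt0 x x0; nra.
Qed.

Lemma exists_mulmx_neq0 M : M != 0 -> exists x, M *m x != 0.
Proof.
move=> M0; have /existsP[[i j] /= Mij] : [exists ij : 'I_m * 'I_m, M ij.1 ij.2 != 0].
  apply: contraR M0 => /existsPn M0; apply/eqP/matrixP => i j.
  by have := M0 (i, j); rewrite mxE negbK => /eqP.
exists (delta_mx j 0); rewrite -colE; apply: contraNneq Mij => Mj0.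
by have := congr1 (fun N : 'cV_m => N i 0) Mj0; rewrite !mxE => ->.
Qed.

End DefiniteMatrices.

Section InverseCombination.
Variables (R : realType) (m : nat) (X Y : 'M[R]_m) (a b : R).
Hypotheses (pX : pdmx X) (pY : pdmx Y) (a0 : 0 <= a) (b0 : 0 <= b).
Let S := a *: invmx X + b *: invmx Y.
Hypothesis uS : S \in unitmx.

Lemma qform_inv_comb_le (x u v : 'cV[R]_m) : u + v = x ->
  a * b * qform (invmx S) x <= b * qform X u + a * qform Y v.
Proof.
move=> uv; set y := invmx S *m x.
have uX := pdmx_unit pX; have uY := pdmx_unit pY.
have [sX _] := pX; have [sY _] := pY.
have sS : symmx S by apply: symmx_add; apply/symmx_scale/symmx_inv.
have hX := pdmx_qform_ge0 pX (u + (- a) *: (invmx X *m y)).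
have hY := pdmx_qform_ge0 pY (v + (- b) *: (invmx Y *m y)).
rewrite qform_expand (bformC (invmx X *m y) u sX) bform_invr // -qform_inv // in hX.
rewrite qform_expand (bformC (invmx Y *m y) v sY) bform_invr // -qform_inv // in hY.
have Sy : a * qform (invmx X) y + b * qform (invmx Y) y = qform (invmx S) x.
  by rewrite [RHS]qform_inv // -/y {1}/S /qform bformDm !bformZm.
have xy : (u^T *m y) 0 0 + (v^T *m y) 0 0 = qform (invmx S) x.
  by rewrite /qform /bform -mulmxA -/y -uv linearD /= mulmxDl [RHS]mxE.
have := addr_ge0 (mulr_ge0 b0 hX) (mulr_ge0 a0 hY).
rewrite -Sy in xy; nra.
Qed.

End InverseCombination.

Section Pencil.
Variables (R : realType) (m : nat) (A B D : 'M[R]_m).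
Hypotheses (A_ge0 : forall x, 0 <= qform A x) (B_ge0 : forall x, 0 <= qform B x).
Hypothesis D_ge0 : forall x, 0 <= qform D x.
Hypothesis discr_ge0 : forall x, 4 * qform A x * qform B x <= qform D x ^+ 2.
Variable z : 'cV[R]_m.
Hypotheses (Az_gt0 : 0 < qform A z) (Bz_gt0 : 0 < qform B z).

Definition pencil s := s ^+ 2 *: A - s *: D + B.
Definition dpencil s := (2 * s) *: A - D.

Lemma qform_pencil s x :
  qform (pencil s) x = s ^+ 2 * qform A x - s * qform D x + qform B x.
Proof. by rewrite /qform /pencil bformDm bformBm !bformZm. Qed.

Lemma qform_dpencil s x : qform (dpencil s) x = 2 * s * qform A x - qform D x.
Proof. by rewrite /qform /dpencil bformBm !bformZm. Qed.

Lemma qformB_eq0 x : qform A x = 0 -> qform D x = 0 -> qform B x = 0.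
Proof.
move=> Ax Dx; apply/eqP; rewrite eq_le B_ge0 andbT leNgt; apply/negP => Bx.
(* Along x + l z the discriminant inequality reads
   4 l^2 (A z) (B x + O(l)) <= l^4 (D z)^2, which fails for small l. *)
have [e e0 he] :=
  small_sqr_lt (mulr_gt0 (mulr_gt0 (ltr0n _ 4) Az_gt0) Bx) (sqr_ge0 (qform D z)).
set a := qform A z in he *; set f := qform D z in he *; set c := bform B x z + bform B z x.
have [l [l2 lc]] : exists l, l ^+ 2 = e ^+ 2 /\ 0 <= l * c.
  have [c0|c0] := lerP 0 c; first by exists e; split => //; apply: mulr_ge0 => //; lra.
  by exists (- e); rewrite sqrrN; split => //; nra.
have := discr_ge0 (x + l *: z).
rewrite !qform_expand Ax Dx (qform_eq0_polar A_ge0 Ax) (qform_eq0_polar D_ge0 Dx) -/c.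
rewrite !mulr0 !add0r l2 -/a -/f => h.
have e2 : 0 < e ^+ 2 by rewrite exprn_gt0.
have : e ^+ 2 * (4 * a * (qform B x + l * c + e ^+ 2 * qform B z))
    <= e ^+ 2 * (e ^+ 2 * f ^+ 2).
  have -> : e ^+ 2 * (e ^+ 2 * f ^+ 2) = (e ^+ 2 * f) ^+ 2 by ring.
  by rewrite mulrCA mulrA -(mulrA 4) [a * _]mulrC.
rewrite ler_pM2l // => h'; have Bz := B_ge0 z.
have : 0 <= a * (l * c + e ^+ 2 * qform B z).
  by apply: mulr_ge0; [exact: ltW Az_gt0 | exact: addr_ge0 lc (mulr_ge0 (ltW e2) Bz)].
nra.
Qed.

Lemma dpencil_neq0 s x : 0 < s -> 0 < qform (pencil s) x -> qform (dpencil s) x != 0.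
Proof.
rewrite qform_pencil qform_dpencil subr_eq0 => s0 px; apply/eqP => Dx.
have Ax := A_ge0 x; have Bx := B_ge0 x; have := discr_ge0 x.
have [Ax0|Ax_neq0] := eqVneq (qform A x) 0.
  have Dx0 : qform D x = 0 by rewrite -Dx Ax0 mulr0.
  by move: px; rewrite Ax0 Dx0 (qformB_eq0 Ax0 Dx0); lra.
have Ax_gt0 : 0 < qform A x by rewrite lt_def Ax_neq0 Ax.
move: px; rewrite -Dx => px h.
have : 0 < 4 * qform A x * (s ^+ 2 * qform A x - s * (2 * s * qform A x) + qform B x).
  by apply: mulr_gt0 => //; lra.
nra.
Qed.

(* [qform (pencil s) x] is a quadratic in s with real roots and [qform (dpencil s) x]
   its derivative: [left_of s] ([right_of s]) says that s lies strictly left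
   (right) of the root interval of some x. *)
Definition left_of s :=
  0 < s /\ exists x, 0 < qform (pencil s) x /\ qform (dpencil s) x < 0.
Definition right_of s :=
  0 < s /\ exists x, 0 < qform (pencil s) x /\ 0 < qform (dpencil s) x.

Lemma not_left_right s : left_of s -> right_of s -> False.
Proof.
move=> [s0 [x [px dx]]] [_ [y [py dy]]].
wlog pxy : y py dy / 0 <= bform (pencil s) x y + bform (pencil s) y x.
  move=> W; have [|pxy] := lerP 0 (bform (pencil s) x y + bform (pencil s) y x).
    exact: W.
  by apply: (W (- y)); rewrite ?qformN // bformNl bformNr; lra.
(* At x + l y, with l > 0 a root of the derivative, the pencil is still positive. *)
have [l l0 hl] := exists_pos_root_quadratic (bform (dpencil s) x y + bform (dpencil s) y x) dx dy.
have pxly : 0 < qform (pencil s) (x + l *: y).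
  rewrite qform_expand; have := mulr_ge0 (ltW l0) pxy.
  have := mulr_ge0 (sqr_ge0 l) (ltW py); lra.
by have := dpencil_neq0 s0 pxly; rewrite qform_expand hl eqxx.
Qed.

Lemma left_of_le s t : left_of s -> 0 < t -> t <= s -> left_of t.
Proof.
move=> [s0 [x]]; rewrite !qform_pencil !qform_dpencil => -[px dx] t0 ts.
split => //; exists x; rewrite !qform_pencil !qform_dpencil.
have Ax := A_ge0 x; split; last by nra.
have : t * qform A x <= s * qform A x by rewrite ler_wpM2r.
have -> : t ^+ 2 * qform A x - t * qform D x + qform B x = s ^+ 2 * qform A x
    - s * qform D x + qform B x + (s - t) * (qform D x - (t + s) * qform A x) by ring.
nra.
Qed.

Lemma left_of_open s : left_of s -> exists2 d, 0 < d & left_of (s + d).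
Proof.
move=> [s0 [x]]; rewrite !qform_pencil !qform_dpencil => -[px dx].
have Ax := A_ge0 x; have c0 : 0 <= 2 * qform A x by lra.
have dx' : 0 < - (2 * s * qform A x - qform D x) by lra.
have [d [d0 dk dc _]] := exists_small_pos px dx' c0 ltr01.
exists d => //; split; first lra.
by exists x; rewrite !qform_pencil !qform_dpencil; split; nra.
Qed.

Lemma right_of_open s : right_of s -> exists2 d, 0 < d & d < s /\ right_of (s - d).
Proof.
move=> [s0 [x]]; rewrite !qform_pencil !qform_dpencil => -[px dx].
have Ax := A_ge0 x; have c0 : 0 <= 2 * qform A x by lra.
have [d [d0 dk dc ds]] := exists_small_pos px dx c0 s0.
exists d => //; split => //; split; first lra.
by exists x; rewrite !qform_pencil !qform_dpencil; split; nra.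
Qed.

Lemma pencil_le0 s : 0 < s -> ~ left_of s -> ~ right_of s ->
  forall x, qform (pencil s) x <= 0.
Proof.
move=> s0 nl nr x; rewrite leNgt; apply/negP => px.
have [dx|dx|dx] := ltgtP (qform (dpencil s) x) 0.
- by apply: nl; split => //; exists x.
- by apply: nr; split => //; exists x.
- by move: (dpencil_neq0 s0 px); rewrite dx eqxx.
Qed.

Lemma exists_left_of : exists s, left_of s.
Proof.
have Dz : 0 < qform D z.
  have := discr_ge0 z; have := D_ge0 z; rewrite le_eqVlt => /orP[/eqP <-|//].
  by rewrite expr0n /=; have := mulr_gt0 Az_gt0 Bz_gt0; lra.
have c0 : 0 <= 2 * qform A z by have := Az_gt0; lra.
have [d [d0 dk dc _]] := exists_small_pos Bz_gt0 Dz c0 ltr01.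
exists d; split => //; exists z; rewrite qform_pencil qform_dpencil; split; nra.
Qed.

Lemma exists_right_of : exists s, right_of s.
Proof.
set s := (qform D z + 1) / qform A z.
have sA : s * qform A z = qform D z + 1 by rewrite /s divfK ?gt_eqF.
have s0 : 0 < s by apply: divr_gt0 => //; have := D_ge0 z; lra.
have s2A : s ^+ 2 * qform A z = s * (qform D z + 1) by rewrite expr2 -mulrA sA.
exists s; split => //; exists z; rewrite qform_pencil qform_dpencil.
by have := D_ge0 z; have := Bz_gt0; split; lra.
Qed.

Lemma exists_pencil_le0 : exists2 s, 0 < s & forall x, qform (pencil s) x <= 0.
Proof.
have [t Lt] := exists_left_of; have [u Ru] := exists_right_of.
have left_lt_right s : left_of s -> s < u.
  move=> Ls; rewrite ltNge; apply/negP => us.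
  by apply: (not_left_right _ Ru); apply: left_of_le Ls _ us; case: Ru.
have hs : has_sup left_of by split; [exists t | exists u => s /left_lt_right/ltW].
have t0 : 0 < t by case: Lt.
have ts : t <= sup left_of by apply: sup_upper_bound.
exists (sup left_of); first lra.
apply: pencil_le0; first lra.
- move=> /left_of_open[d d0 Ld].
  by have := sup_upper_bound hs Ld; lra.
- move=> /right_of_open[d d0 [ds Rd]].
  have [r Lr hr] := sup_adherent d0 hs.
  by apply: (not_left_right _ Rd); apply: left_of_le Lr _ _; lra.
Qed.

End Pencil.

Section FusedCovariance.
Variables (R : realType) (m : nat) (CA CB KA KB PAB : 'M[R]_m).

Lemma qform_C_F x : qform (C_F CA CB KA KB PAB) x =
  qform CA (KA^T *m x) + bform PAB (KA^T *m x) (KB^T *m x)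
  + bform PAB^T (KB^T *m x) (KA^T *m x) + qform CB (KB^T *m x).
Proof. by rewrite /qform /C_F !bformDm !bform_mul. Qed.

Lemma symmx_C_F : symmx CA -> symmx CB -> symmx (C_F CA CB KA KB PAB).
Proof.
move=> sA sB; rewrite /symmx /C_F !linearD /= !trmx_mul !trmxK sA sB !mulmxA.
by congr (_ + _); rewrite addrAC.
Qed.

End FusedCovariance.

Section SplitCovarianceIntersection.
Variables (R : realType) (m : nat) (PA PB QA QB : 'M[R]_m) (w : R).
Hypotheses (pA : pdmx PA) (pB : pdmx PB) (qA : pdmx QA) (qB : pdmx QB).
Hypothesis w01 : 0 <= w <= 1.

Let X := PA + w *: QA.
Let Y := PB + (1 - w) *: QB.
Let S := w *: invmx X + (1 - w) *: invmx Y.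
Let BS := B_SCI PA PB QA QB w.

Let pX : pdmx X. Proof. by apply: pdmx_addZ => //; case/andP: w01. Qed.
Let pY : pdmx Y. Proof. by apply: pdmx_addZ => //; case/andP: w01; rewrite subr_ge0. Qed.
Let pS : pdmx S. Proof. by apply: pdmx_comb => //; apply: pdmx_inv. Qed.

Lemma pdmx_B_SCI : pdmx BS.
Proof. exact: pdmx_inv. Qed.

Lemma qform_B_SCI_le x u v : u + v = x ->
  w * (1 - w) * qform BS x <= (1 - w) * qform X u + w * qform Y v.
Proof.
case/andP: w01 => w0 w1; rewrite -subr_ge0 in w1.
exact: (qform_inv_comb_le pX pY w0 w1 (pdmx_unit pS)).
Qed.

Let KA := w *: (BS *m invmx X).
Let KB := (1 - w) *: (BS *m invmx Y).

Lemma SCI_gain_sum : KA + KB = 1%:M.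
Proof. by rewrite /KA /KB !scalemxAr -mulmxDr mulVmx //; apply: pdmx_unit. Qed.

Lemma qform_B_SCI_sub_C_F PAB x :
  let p := invmx X *m (BS *m x) in let q := invmx Y *m (BS *m x) in
  qform (BS - C_F (PA + QA) (PB + QB) KA KB PAB) x =
  w * (1 - w) * qform (block_mx PA PAB PAB^T PB) (col_mx p (- q)).
Proof.
move=> p q; have [sX _] := pX; have [sY _] := pY; have [sBS _] := pdmx_B_SCI.
have uX := pdmx_unit pX; have uY := pdmx_unit pY; have [sS _] := pS.
have KAx : KA^T *m x = w *: p.
  by rewrite linearZ /= trmx_mul (symmx_inv sX) sBS -scalemxAl -mulmxA.
have KBx : KB^T *m x = (1 - w) *: q.
  by rewrite linearZ /= trmx_mul (symmx_inv sY) sBS -scalemxAl -mulmxA.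
have BSx : qform BS x = w * qform X p + (1 - w) * qform Y q.
  rewrite [LHS]qform_inv ?(pdmx_unit pS) // /qform bformDm !bformZm.
  by rewrite -!/(qform _ _) !qform_inv.
rewrite /qform bformBm -!/(qform _ x) qform_C_F KAx KBx BSx /qform bform_block.
rewrite !(bformDm, bformZm, bformZl, bformZr, bformNl, bformNr); ring.
Qed.

Lemma SCI_conservative : conservative_fusion PA PB QA QB KA KB BS.
Proof.
have [sBS _] := pdmx_B_SCI; split => //; split; first exact: SCI_gain_sum.
have [sPA _] := pA; have [sPB _] := pB; have [sQA _] := qA; have [sQB _] := qB.
move=> PAB [_ hPAB]; split.
  by rewrite /symmx linearB /= sBS symmx_C_F //; apply: symmx_add.
move=> x; rewrite -/(bform _ x x) -/(qform _ x) qform_B_SCI_sub_C_F.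
case/andP: w01 => w0 w1; apply: mulr_ge0; first by rewrite mulr_ge0 ?subr_ge0.
exact: hPAB.
Qed.

End SplitCovarianceIntersection.

Section RankOneCrossCovariance.
Variables (R : realType) (m : nat) (PA PB : 'M[R]_m).
Hypotheses (pA : pdmx PA) (pB : pdmx PB).

Definition rank1_cross (c : R) (u v : 'cV[R]_m) := c *: ((PA *m u) *m (PB *m v)^T).

Lemma A_Split_rank1 c u v : c ^+ 2 * qform PA u * qform PB v <= 1 ->
  A_Split PA PB (rank1_cross c u v).
Proof.
move=> hc; have [sA _] := pA; have [sB _] := pB.
split; first by rewrite /symmx tr_block_mx trmxK sA sB.
move=> z; rewrite -(vsubmxK z) -/(bform _ _ _) -/(qform _ _) /qform bform_block.
rewrite bform_tr /rank1_cross !bform_rank1 sA sB (bformC u _ sA) -!/(qform _ _).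
have hA := pdmx_qform_ge0 pA; have hB := pdmx_qform_ge0 pB.
have := rank1_block_ge0 (hA (usubmx z)) (hB (dsubmx z)) (hA u) (hB v)
  (bform_sqr_le hA (usubmx z) u sA) (bform_sqr_le hB v (dsubmx z) sB) hc.
lra.
Qed.

Lemma qform_C_F_rank1 CA CB KA KB c x :
  qform (C_F CA CB KA KB (rank1_cross c (KA^T *m x) (KB^T *m x))) x =
  qform CA (KA^T *m x) + qform CB (KB^T *m x)
  + 2 * c * (qform PA (KA^T *m x) * qform PB (KB^T *m x)).
Proof.
have [sA _] := pA; have [sB _] := pB.
rewrite qform_C_F bform_tr /rank1_cross bform_rank1 sA sB /qform; ring.
Qed.

End RankOneCrossCovariance.

Lemma B_SCI0 (R : realType) m (PA PB QA QB : 'M[R]_m) : B_SCI PA PB QA QB 0 = PB + QB.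
Proof. by rewrite /B_SCI !scale0r add0r subr0 !scale1r invmxK. Qed.

Lemma B_SCI1 (R : realType) m (PA PB QA QB : 'M[R]_m) : B_SCI PA PB QA QB 1 = PA + QA.
Proof. by rewrite /B_SCI subrr !scale0r addr0 !scale1r invmxK. Qed.

Section ConservativeFusionBound.
Variables (R : realType) (m : nat) (PA PB QA QB KA KB BF : 'M[R]_m).
Hypotheses (pA : pdmx PA) (pB : pdmx PB) (qA : pdmx QA) (qB : pdmx QB).
Hypothesis cf : conservative_fusion PA PB QA QB KA KB BF.

Let Am := KA *m PA *m KA^T.
Let Bm := KB *m PB *m KB^T.
Let Dm := BF - C_F (PA + QA) (PB + QB) KA KB 0.

Let qform_Am x : qform Am x = qform PA (KA^T *m x).
Proof. by rewrite /qform bform_mul. Qed.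

Let qform_Bm x : qform Bm x = qform PB (KB^T *m x).
Proof. by rewrite /qform bform_mul. Qed.

Let qform_Dm x :
  qform Dm x = qform BF x - (qform (PA + QA) (KA^T *m x) + qform (PB + QB) (KB^T *m x)).
Proof. by rewrite {1}/qform bformBm -!/(qform _ x) qform_C_F trmx0 !bform0m !addr0. Qed.

Lemma rank1_fusion_bound x c : c ^+ 2 * qform Am x * qform Bm x <= 1 ->
  2 * c * (qform Am x * qform Bm x) <= qform Dm x.
Proof.
rewrite !qform_Am !qform_Bm qform_Dm => hc; have [_ [_ conservative]] := cf.
have [_ ] := conservative _ (A_Split_rank1 pA pB hc) => /(_ x).
rewrite -/(bform _ x x) -/(qform _ x) {1}/qform bformBm -!/(qform _ x).
rewrite qform_C_F_rank1 //; lra.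
Qed.

Let Am_ge0 x : 0 <= qform Am x.
Proof. by rewrite qform_Am; apply: pdmx_qform_ge0. Qed.

Let Bm_ge0 x : 0 <= qform Bm x.
Proof. by rewrite qform_Bm; apply: pdmx_qform_ge0. Qed.

Let Dm_ge0 x : 0 <= qform Dm x.
Proof.
by have := @rank1_fusion_bound x 0; rewrite expr0n /= mulr0 !mul0r ler01 => /(_ isT).
Qed.

Let discr_ge0 x : 4 * qform Am x * qform Bm x <= qform Dm x ^+ 2.
Proof.
rewrite -mulrA; apply: sqr_le_of_linear_bound; first by rewrite mulr_ge0.
by move=> c; rewrite mulrA; apply: rank1_fusion_bound.
Qed.

Lemma exists_gain_qforms_pos : KA != 0 -> KB != 0 ->
  exists z, 0 < qform Am z /\ 0 < qform Bm z.
Proof.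
have [_ PA_gt0] := pA; have [_ PB_gt0] := pB.
rewrite -trmx_eq0 => /exists_mulmx_neq0[x KAx].
rewrite -trmx_eq0 => /exists_mulmx_neq0[y KBy].
have Ax : 0 < qform Am x by rewrite qform_Am; apply: PA_gt0.
have By : 0 < qform Bm y by rewrite qform_Bm; apply: PB_gt0.
have [Bx|Bx] := ltrP 0 (qform Bm x); first by exists x.
have [Ay|Ay] := ltrP 0 (qform Am y); first by exists y.
have Bx0 : qform Bm x = 0 by apply/eqP; rewrite eq_le Bx Bm_ge0.
have Ay0 : qform Am y = 0 by apply/eqP; rewrite eq_le Ay Am_ge0.
exists (x + 1 *: y); rewrite !qform_expand Bx0 Ay0 (addrC (bform Am x y)).
rewrite (qform_eq0_polar Am_ge0 Ay0) (qform_eq0_polar Bm_ge0 Bx0).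
by rewrite !mulr0 !addr0 add0r expr1n mul1r.
Qed.

Lemma B_SCI_le_of_pencil s :
  0 < s -> (forall x, qform (pencil Am Bm Dm s) x <= 0) ->
  loewner_le (B_SCI PA PB QA QB (1 + s)^-1) BF.
Proof.
(* As 1 - w = s w, the pencil inequality and [qform_B_SCI_le] bound
   x^T B_SCI(w) x and x^T B_F x by the same quantity. *)
move=> s0 hs; have [sBF [gain_sum _]] := cf; set w := (1 + s)^-1.
have ew : w * (1 + s) = 1 by rewrite mulVf // gt_eqF //; lra.
have w0 : 0 < w by rewrite invr_gt0; lra.
have ew' : 1 - w = s * w by rewrite -{1}ew; ring.
have w01 : 0 <= w <= 1 by rewrite ltW //= -subr_ge0 ew' mulr_ge0 // ltW.
have [sB _] := pdmx_B_SCI pA pB qA qB w01.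
split=> [|x]; first by rewrite /symmx linearB /= sB sBF.
rewrite -/(bform _ x x) bformBm -!/(qform _ x).
have uv : KA^T *m x + KB^T *m x = x.
  by rewrite -mulmxDl -linearD /= gain_sum trmx1 mul1mx.
have := qform_B_SCI_le pA pB qA qB w01 uv; have := hs x.
rewrite qform_pencil qform_Dm qform_Am qform_Bm ew' /qform !bformDm !bformZm.
set F := bform BF x x; set Bw := bform (B_SCI _ _ _ _ _) x x.
set al := bform PA _ _; set be := bform PB _ _.
set qa := bform QA _ _; set qb := bform QB _ _.
move=> pencil_le0 blue.
have key : s * w * (al + w * qa) + w * (be + s * w * qb) =
  w ^+ 2 * (s ^+ 2 * al - s * (F - (al + qa + (be + qb))) + be) + s * w ^+ 2 * F
  + (s * w * al + w * be) * (1 - w * (1 + s)) by ring.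
rewrite ew subrr mulr0 addr0 in key.
have sw2 : 0 < s * w ^+ 2 by rewrite mulr_gt0 ?exprn_gt0.
rewrite subr_ge0 -(ler_pM2l sw2).
have : w ^+ 2 * (s ^+ 2 * al - s * (F - (al + qa + (be + qb))) + be) <= 0.
  by rewrite pmulr_rle0 // exprn_gt0.
have -> : s * w ^+ 2 * Bw = w * (s * w) * Bw by ring.
lra.
Qed.

Lemma conservative_ge_B_SCI :
  exists2 w, 0 <= w <= 1 & loewner_le (B_SCI PA PB QA QB w) BF.
Proof.
have [_ [gain_sum conservative]] := cf.
have A_Split0 : A_Split PA PB 0.
  have := @A_Split_rank1 _ _ _ _ pA pB 0 0 0; rewrite /rank1_cross scale0r.
  by rewrite expr0n /= !mul0r ler01 => /(_ isT).
have C_F_unit (CA CB : 'M[R]_m) : C_F CA CB 0 1%:M 0 = CB /\ C_F CA CB 1%:M 0 0 = CA.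
  by split; rewrite /C_F trmx0 trmx1 !mul0mx !mulmx0 !mul1mx !mulmx1 ?add0r ?addr0.
have [KA0|KA_neq0] := eqVneq KA 0.
  have KB1 : KB = 1%:M by rewrite -gain_sum KA0 add0r.
  exists 0; first by rewrite lexx ler01.
  rewrite B_SCI0; have := conservative 0 A_Split0.
  by rewrite KA0 KB1 (proj1 (C_F_unit _ _)).
have [KB0|KB_neq0] := eqVneq KB 0.
  have KA1 : KA = 1%:M by rewrite -gain_sum KB0 addr0.
  exists 1; first by rewrite lexx ler01.
  rewrite B_SCI1; have := conservative 0 A_Split0.
  by rewrite KA1 KB0 (proj2 (C_F_unit _ _)).
have [z [Az Bz]] := exists_gain_qforms_pos KA_neq0 KB_neq0.
have [s s0 hs] := exists_pencil_le0 Am_ge0 Bm_ge0 Dm_ge0 discr_ge0 Az Bz.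
exists (1 + s)^-1; last exact: B_SCI_le_of_pencil.
rewrite invr_ge0 invf_le1; lra.
Qed.

End ConservativeFusionBound.

Unset Implicit Arguments.

Theorem corollary1 (R : realType) (n : nat) (PA PB QA QB : 'M[R]_n.+1)
  (J : 'M[R]_n.+1 -> R) (wstar : R) :
  pdmx PA -> pdmx PB -> pdmx QA -> pdmx QB ->
  increasing_cost J ->
  0 <= wstar <= 1 ->
  (forall w : R, 0 <= w <= 1 ->
     J (B_SCI PA PB QA QB wstar) <= J (B_SCI PA PB QA QB w)) ->
  let Bs := B_SCI PA PB QA QB wstar in
  let KA := wstar *: (Bs *m invmx (PA + wstar *: QA)) in
  let KB := (1 - wstar) *: (Bs *m invmx (PB + (1 - wstar) *: QB)) in
  conservative_fusion PA PB QA QB KA KB Bs /\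
  (forall KA' KB' BF : 'M[R]_n.+1,
     conservative_fusion PA PB QA QB KA' KB' BF -> J Bs <= J BF).
Proof.
move=> pA pB qA qB [J_mono _] wstar01 J_min Bs KA KB.
split=> [|KA' KB' BF cf]; first exact: SCI_conservative.
have [w w01 le_BF] := conservative_ge_B_SCI pA pB qA qB cf.
apply: le_trans (J_min w w01) (J_mono _ _ _ _ le_BF).
- by case: (pdmx_B_SCI pA pB qA qB w01).
- by case: cf.
Qed.
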